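(* If $X$ is uncountable and $B \subseteq X$ is a Bernstein set, then the game $\Gamma(1_B)$ is not determined, i.e. neither player has a winning strategy.
   Context: Let $A$ be a non-empty countable set and $T$ a pruned tree on $A$ (a set of finite sequences of elements of $A$, closed under initial segments, in which every sequence has a proper extension in $T$). Let $X$ be the set of infinite branches of $T$, with the topology generated by the cylinder sets $O(s) = \{x \in X : s \text{ is an initial segment of } x\}$, $s \in T$. A set $B \subseteq X$ is a Bernstein set if neither $B$ nor $X \setminus B$ contains a non-empty perfect set; $1_B$ is the indicator function of $B$. For $f : X \to \mathbb{R}$, the game $\Gamma(f)$: Player I and Player II alternate, Player I moving first; Player I plays $x_0, x_1, \dots \in A$ subject to $(x_0,\dots,x_t) \in T$ for all $t$, and after each move $x_t$ Player II plays a real number $v_t$. Player II wins the run iff $f(x_0,x_1,\dots) = \limsup_{t\to\infty} v_t$; otherwise Player I wins. *)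

From Stdlib Require Import Reals List ClassicalEpsilon.
From Coquelicot Require Import Coquelicot.
Import ListNotations.
Open Scope R_scope.

Section Defs.
Context {A : Type}.

Definition is_tree (T : list A -> Prop) : Prop :=
  forall s t : list A, T (s ++ t) -> T s.

Definition is_pruned (T : list A -> Prop) : Prop :=
  forall s, T s -> exists a : A, T (s ++ [a]).

Definition prefix {B : Type} (x : nat -> B) (n : nat) : list B :=
  map x (seq 0 n).

Definition branch (T : list A -> Prop) (x : nat -> A) : Prop :=
  forall n, T (prefix x n).

Definition countable_type : Prop :=
  exists f : A -> nat, forall a b, f a = f b -> a = b.

Definition countable_body (T : list A -> Prop) : Prop :=
  exists g : (nat -> A) -> nat,
    forall x y, branch T x -> branch T y -> g x = g y -> x = y.

(* open subsets of X (topology generated by the cylinders O(s)) *)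
Definition openX (T : list A -> Prop) (U : (nat -> A) -> Prop) : Prop :=
  (forall x, U x -> branch T x) /\
  forall x, U x -> exists n, forall y, branch T y -> prefix y n = prefix x n -> U y.

Definition closedX (T : list A -> Prop) (P : (nat -> A) -> Prop) : Prop :=
  (forall x, P x -> branch T x) /\ openX T (fun y => branch T y /\ ~ P y).

Definition perfectX (T : list A -> Prop) (P : (nat -> A) -> Prop) : Prop :=
  closedX T P /\
  forall x, P x -> forall n, exists y, P y /\ y <> x /\ prefix y n = prefix x n.

Definition bernstein (T : list A -> Prop) (B : (nat -> A) -> Prop) : Prop :=
  (forall x, B x -> branch T x) /\
  ~ (exists P, perfectX T P /\ (exists x, P x) /\ (forall x, P x -> B x)) /\
  ~ (exists P, perfectX T P /\ (exists x, P x) /\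
               (forall x, P x -> branch T x /\ ~ B x)).

Definition indicator (B : (nat -> A) -> Prop) (x : nat -> A) : R :=
  if excluded_middle_informative (B x) then 1 else 0.

(* Strategies.  Player I: from I's previous moves and II's previous moves
   (x_0..x_{t-1}, v_0..v_{t-1}) choose x_t.  Player II: from (x_0..x_t) and
   (v_0..v_{t-1}) choose v_t. *)
Definition strategyI := list A -> list R -> A.
Definition strategyII := list A -> list R -> R.

Definition follows_I (sigma : strategyI) (x : nat -> A) (v : nat -> R) : Prop :=
  forall t, x t = sigma (prefix x t) (prefix v t).

Definition follows_II (tau : strategyII) (x : nat -> A) (v : nat -> R) : Prop :=
  forall t, v t = tau (prefix x (S t)) (prefix v t).

Definition II_wins_run (f : (nat -> A) -> R) (x : nat -> A) (v : nat -> R) : Prop :=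
  LimSup_seq v = Finite (f x).

(* a winning strategy for I must only produce legal moves, and win every run *)
Definition winning_I (T : list A -> Prop) (f : (nat -> A) -> R) (sigma : strategyI) : Prop :=
  forall x v, follows_I sigma x v -> branch T x /\ ~ II_wins_run f x v.

Definition winning_II (T : list A -> Prop) (f : (nat -> A) -> R) (tau : strategyII) : Prop :=
  forall x v, branch T x -> follows_II tau x v -> II_wins_run f x v.

Definition determined (T : list A -> Prop) (f : (nat -> A) -> R) : Prop :=
  (exists sigma, winning_I T f sigma) \/ (exists tau, winning_II T f tau).

End Defs.

From Stdlib Require Import Reals List Arith Lia Lra.
From Stdlib Require Import Classical ClassicalEpsilon FunctionalExtensionality Cantor.
From Coquelicot Require Import Coquelicot.
Import ListNotations.

(* Both halves of the proof produce a non-empty perfect set inside B or inside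
   X \ B, which a Bernstein set forbids.  Perfect sets come from one general
   construction, a Cantor scheme ([cantor_scheme]): finite approximations
   ("nodes") such that every node has two extensions that already disagree; the
   points approximated along all binary paths form a non-empty perfect set.

   - Player I ([I_not_winning]): let II answer with 0/1 sequences.  If II
     eventually answers 0 the play lies in B, if eventually 1 it does not, so
     I's replies split.  Along every path II answers 1 infinitely often, so the
     resulting perfect set avoids B.
   - Player II ([II_not_winning]): split inside uncountable cylinders
     ([thick_splits], the only use of countability of A and uncountability of X).
     Either II's answers reach 1/2 densely, giving a perfect subset of B, or in
     some uncountable cylinder they eventually stay below 1/2, giving a perfect
     set outside B. *)

Definition agree {B : Type} (x y : nat -> B) (n : nat) : Prop :=
  forall i, (i < n)%nat -> x i = y i.

Section Agreement.
Local Open Scope nat_scope.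
Context {B : Type}.

Lemma prefix_S (x : nat -> B) n : prefix x (S n) = prefix x n ++ [x n].
Proof. unfold prefix. rewrite seq_S, map_app. reflexivity. Qed.

Lemma prefix_length (x : nat -> B) n : length (prefix x n) = n.
Proof. unfold prefix. rewrite length_map, length_seq. reflexivity. Qed.

Lemma prefix_agree (x y : nat -> B) n : prefix x n = prefix y n <-> agree x y n.
Proof.
  induction n as [|n IH].
  - split; [intros _ i Hi; lia | reflexivity].
  - rewrite !prefix_S. split.
    + intros H. apply app_inj_tail in H as [Hpre Hlast].
      apply IH in Hpre. intros i Hi.
      destruct (Nat.eq_dec i n) as [->|]; [congruence | apply Hpre; lia].
    + intros H. f_equal; [apply IH; intros i Hi; apply H; lia | f_equal; apply H; lia].
Qed.

Lemma agree_sym (x y : nat -> B) n : agree x y n -> agree y x n.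
Proof. intros H i Hi. symmetry. auto. Qed.

Lemma agree_trans (x y z : nat -> B) n : agree x y n -> agree y z n -> agree x z n.
Proof. intros H1 H2 i Hi. rewrite H1; auto. Qed.

Lemma agree_le (x y : nat -> B) n m : m <= n -> agree x y n -> agree x y m.
Proof. intros Hm H i Hi. apply H. lia. Qed.

End Agreement.

Section Diagonal.
Local Open Scope nat_scope.
Context {B : Type} (f : nat -> nat -> B) (n : nat -> nat).
Hypothesis n_grows : forall k, n k <= n (S k).
Hypothesis f_coherent : forall k, agree (f (S k)) (f k) (n k).

Lemma chain_agree k k' : k <= k' -> n k <= n k' /\ agree (f k') (f k) (n k).
Proof.
  induction 1 as [|k' _ [Hn Hf]].
  - split; [lia | intros i _; reflexivity].
  - split; [specialize (n_grows k'); lia |].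
    intros i Hi. rewrite f_coherent by lia. apply Hf. lia.
Qed.

Hypothesis n_unbounded : forall k, k <= n k.

Lemma diagonal_agree k : agree (fun t => f (S t) t) (f k) (n k).
Proof.
  intros t Ht. destruct (Nat.le_ge_cases k (S t)) as [Hk|Hk].
  - apply (chain_agree k (S t) Hk); exact Ht.
  - symmetry. apply (chain_agree (S t) k Hk). specialize (n_unbounded (S t)). lia.
Qed.

End Diagonal.

(* Nodes [u] carry a point [point u] of X that is only relevant
   below [depth u]; [R] records extra information passed from a node to its
   extensions. *)
Section CantorScheme.
Local Open Scope nat_scope.
Context {A : Type} (T : list A -> Prop) {Node : Type}
  (point : Node -> nat -> A) (depth : Node -> nat)
  (admissible : Node -> Prop) (R : Node -> Node -> Prop) (root : Node).

Definition extends (u u' : Node) : Prop :=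
  admissible u' /\ R u u' /\ depth u < depth u' /\
  agree (point u') (point u) (depth u).

Definition splits (u u1 u2 : Node) : Prop :=
  extends u u1 /\ extends u u2 /\
  exists i, i < depth u1 /\ i < depth u2 /\ point u1 i <> point u2 i.

Hypothesis split : forall u, admissible u -> exists u1 u2, splits u u1 u2.
Hypothesis admissible_branch : forall u, admissible u -> branch T (point u).
Hypothesis root_admissible : admissible root.

Definition child (u : Node) (b : bool) : Node :=
  let p := epsilon (inhabits (root, root)) (fun p => splits u (fst p) (snd p)) in
  if b then fst p else snd p.

Lemma child_splits u : admissible u -> splits u (child u true) (child u false).
Proof.
  intros Hu. unfold child; cbv zeta.
  apply (epsilon_spec (inhabits (root, root)) (fun p => splits u (fst p) (snd p))).
  destruct (split u Hu) as (u1 & u2 & H). exists (u1, u2). exact H.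
Qed.

Lemma child_extends u b : admissible u -> extends u (child u b).
Proof. intros Hu. destruct (child_splits u Hu) as (H1 & H2 & _). now destruct b. Qed.

Fixpoint node (c : nat -> bool) (k : nat) : Node :=
  match k with O => root | S k => child (node c k) (c k) end.

Lemma node_admissible c k : admissible (node c k).
Proof. induction k as [|k IH]; [exact root_admissible | apply (child_extends _ _ IH)]. Qed.

Lemma node_extends c k : extends (node c k) (node c (S k)).
Proof. apply child_extends, node_admissible. Qed.

Lemma node_depth c k : k <= depth (node c k).
Proof.
  induction k as [|k IH]; [lia |].
  destruct (node_extends c k) as (_ & _ & Hd & _). lia.
Qed.

Lemma node_chain c k k' : k <= k' ->
  depth (node c k) <= depth (node c k') /\
  agree (point (node c k')) (point (node c k)) (depth (node c k)).
Proof.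
  apply (chain_agree (fun k => point (node c k)) (fun k => depth (node c k))).
  - intros j. destruct (node_extends c j) as (_ & _ & Hd & _). lia.
  - intros j. apply node_extends.
Qed.

Lemma node_prefix c c' k : (forall j, j < k -> c j = c' j) -> node c k = node c' k.
Proof.
  induction k as [|k IH]; intros H; [reflexivity |]. simpl.
  rewrite IH by (intros; apply H; lia). rewrite H by lia. reflexivity.
Qed.

Lemma node_fork c c' j : node c j = node c' j -> c j <> c' j ->
  exists i, i < depth (node c (S j)) /\ i < depth (node c' (S j)) /\
            point (node c (S j)) i <> point (node c' (S j)) i.
Proof.
  intros E Hne. simpl. rewrite <- E.
  destruct (child_splits (node c j) (node_admissible c j)) as (_ & _ & i & H1 & H2 & Hi).
  destruct (c j), (c' j); try contradiction; exists i; auto.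
Qed.

Definition path_point (c : nat -> bool) (t : nat) : A := point (node c (S t)) t.

Lemma path_point_agree c k :
  agree (path_point c) (point (node c k)) (depth (node c k)).
Proof.
  apply (diagonal_agree (fun k => point (node c k)) (fun k => depth (node c k))).
  - intros j. apply (node_chain c j (S j)). lia.
  - intros j. apply node_extends.
  - apply node_depth.
Qed.

Definition approximated (y : nat -> A) (c : nat -> bool) (k : nat) : Prop :=
  agree y (point (node c k)) (depth (node c k)).

Lemma approximated_lower y c k j : approximated y c k -> j <= k -> approximated y c j.
Proof.
  intros H Hj i Hi. destruct (node_chain c j k Hj) as [Hd Ha].
  rewrite H by lia. apply Ha. exact Hi.
Qed.

Definition scheme_set (y : nat -> A) : Prop :=
  branch T y /\ forall k, exists c, approximated y c k.

Lemma approximations_coherent y c c' k k' :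
  approximated y c k -> approximated y c' k' ->
  forall j, j < k -> j < k' -> c j = c' j.
Proof.
  intros H H' j. induction j as [j IH] using lt_wf_ind. intros Hk Hk'.
  assert (E : node c j = node c' j) by (apply node_prefix; intros; apply IH; lia).
  destruct (Bool.bool_dec (c j) (c' j)) as [|Hne]; [assumption | exfalso].
  destruct (node_fork c c' j E Hne) as (i & Hi & Hi' & Hd). apply Hd.
  rewrite <- (approximated_lower y c k (S j) H), <- (approximated_lower y c' k' (S j) H');
    auto; lia.
Qed.

Lemma scheme_path y : scheme_set y -> exists c, forall k, approximated y c k.
Proof.
  intros [_ H]. destruct (choice _ H) as [cs Hcs].
  exists (fun j => cs (S j) j). intros k. unfold approximated.
  rewrite (node_prefix _ (cs k) k); [apply Hcs |].
  intros j Hj. apply (approximations_coherent y _ _ (S j) k); auto.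
Qed.

Lemma path_point_in c : scheme_set (path_point c).
Proof.
  split.
  - intros n. replace (prefix (path_point c) n) with (prefix (point (node c n)) n).
    + apply admissible_branch, node_admissible.
    + apply prefix_agree, agree_sym, (agree_le _ _ (depth (node c n))).
      * apply node_depth.
      * apply path_point_agree.
  - intros k. exists c. apply path_point_agree.
Qed.

Lemma level_finite k : exists L : list Node, forall c, In (node c k) L.
Proof.
  induction k as [|k [L HL]]; [exists [root]; simpl; auto |].
  exists (flat_map (fun u => [child u true; child u false]) L).
  intros c. simpl. apply in_flat_map. exists (node c k). split; [auto |].
  destruct (c k); simpl; auto.
Qed.

Lemma level_depth_bounded k : exists M, forall c, depth (node c k) <= M.
Proof.
  assert (Hbound : forall L, exists M, forall u, In u L -> depth u <= M).
  { induction L as [|u L [M HM]]; [exists 0; simpl; tauto |].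
    exists (Nat.max (depth u) M). intros v [<- | Hv]; [lia | specialize (HM v Hv); lia]. }
  destruct (level_finite k) as [L HL]. destruct (Hbound L) as [M HM].
  exists M. intros c. apply HM, HL.
Qed.

(* A branch failing approximation at level [k] fails it on a whole cylinder. *)
Lemma scheme_set_closed : closedX T scheme_set.
Proof.
  split; [intros y Hy; apply Hy |].
  split; [intros y Hy; apply Hy |].
  intros y [Hy Hout].
  assert (Hk : exists k, ~ exists c, approximated y c k).
  { apply not_all_ex_not. intros Hall. apply Hout. split; assumption. }
  destruct Hk as [k Hk]. destruct (level_depth_bounded k) as [M HM].
  exists M. intros y' Hy' Hpre. split; [assumption |]. intros [_ Hin]. apply Hk.
  destruct (Hin k) as [c Hc]. exists c. apply prefix_agree in Hpre.
  eapply agree_trans; [apply agree_sym, (agree_le _ _ M (depth (node c k))) | exact Hc].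
  - apply HM.
  - exact Hpre.
Qed.

(* Flipping the path of [y] at step [n] gives another point with the same
   length-[n] prefix, so no point is isolated. *)
Lemma scheme_set_perfect : perfectX T scheme_set.
Proof.
  split; [exact scheme_set_closed |].
  intros y Hy n. destruct (scheme_path y Hy) as [c Hc].
  set (c' := fun j => if Nat.eq_dec j n then negb (c j) else c j).
  assert (E : node c n = node c' n).
  { apply node_prefix. intros j Hj. unfold c'. destruct (Nat.eq_dec j n); [lia | reflexivity]. }
  exists (path_point c'). split; [apply path_point_in | split].
  - intros Heq. assert (Hne : c n <> c' n).
    { unfold c'. destruct (Nat.eq_dec n n); [destruct (c n); discriminate | lia]. }
    destruct (node_fork c c' n E Hne) as (i & Hi & Hi' & Hd). apply Hd.
    rewrite <- (Hc (S n) i Hi), <- (path_point_agree c' (S n) i Hi'), Heq. reflexivity.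
  - apply prefix_agree. intros i Hi. pose proof (node_depth c n).
    rewrite (path_point_agree c' n) by (rewrite <- E; lia).
    rewrite <- E, (Hc n); [reflexivity | lia].
Qed.

Lemma cantor_scheme : exists P, perfectX T P /\ (exists x, P x) /\
  forall y, P y -> exists us : nat -> Node, forall k,
    admissible (us k) /\ R (us k) (us (S k)) /\ k <= depth (us k) /\
    agree y (point (us k)) (depth (us k)).
Proof.
  exists scheme_set. split; [exact scheme_set_perfect |].
  split; [exists (path_point (fun _ => true)); apply path_point_in |].
  intros y Hy. destruct (scheme_path y Hy) as [c Hc]. exists (node c).
  intros k. destruct (node_extends c k) as (_ & HR & _).
  repeat split; [apply node_admissible | exact HR | apply node_depth | apply Hc].
Qed.

End CantorScheme.

Section LimSupFacts.
Local Open Scope R_scope.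

Lemma LimSup_seq_correct (u : nat -> R) : is_LimSup_seq u (LimSup_seq u).
Proof. unfold LimSup_seq. destruct (ex_LimSup_seq u); assumption. Qed.

Lemma LimSup_often_ge (u : nat -> R) (a : R) :
  (forall N, exists n, (N <= n)%nat /\ a <= u n) -> Rbar_le a (LimSup_seq u).
Proof.
  intros Hoften. pose proof (LimSup_seq_correct u) as Hcorrect.
  destruct (LimSup_seq u) as [r| |]; simpl in *; [| exact I |].
  - destruct (Rle_or_lt a r) as [|Hr]; [assumption | exfalso].
    assert (Heps : 0 < a - r) by lra.
    destruct (Hcorrect (mkposreal _ Heps)) as [_ [N HN]]. simpl in HN.
    destruct (Hoften N) as (n & Hn & Hu). specialize (HN n Hn). lra.
  - destruct (Hcorrect a) as [N HN]. destruct (Hoften N) as (n & Hn & Hu).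
    specialize (HN n Hn). lra.
Qed.

Lemma LimSup_eventually_le (u : nat -> R) (a : R) :
  eventually (fun n => u n <= a) -> Rbar_le (LimSup_seq u) a.
Proof. intros H. rewrite <- (LimSup_seq_const a). apply LimSup_le, H. Qed.

Lemma LimSup_eventually_const (u : nat -> R) (c : R) :
  eventually (fun n => u n = c) -> LimSup_seq u = c.
Proof.
  intros [N HN]. apply Rbar_le_antisym.
  - apply LimSup_eventually_le. exists N. intros n Hn. rewrite HN by assumption. lra.
  - apply LimSup_often_ge. intros M. exists (Nat.max N M).
    rewrite HN by lia. split; [lia | lra].
Qed.

Definition binary (v : nat -> R) : Prop := forall t, v t = 0 \/ v t = 1.

Lemma LimSup_binary_often_one (v : nat -> R) :
  binary v -> (forall N, exists n, (N <= n)%nat /\ v n = 1) -> LimSup_seq v = 1.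
Proof.
  intros Hbin Hones. apply Rbar_le_antisym.
  - apply LimSup_eventually_le. exists 0%nat. intros n _. destruct (Hbin n); lra.
  - apply LimSup_often_ge. intros N. destruct (Hones N) as (n & Hn & Hv).
    exists n. split; [assumption | lra].
Qed.

Lemma indicator_ne0 {A : Type} (B : (nat -> A) -> Prop) x : indicator B x <> 0 -> B x.
Proof. unfold indicator. destruct (excluded_middle_informative (B x)); tauto. Qed.

Lemma indicator_ne1 {A : Type} (B : (nat -> A) -> Prop) x : indicator B x <> 1 -> ~ B x.
Proof. unfold indicator. destruct (excluded_middle_informative (B x)); tauto. Qed.

End LimSupFacts.

Section PlayerI.
Local Open Scope R_scope.
Context {A : Type} (T : list A -> Prop) (B : (nat -> A) -> Prop) (sigma : @strategyI A).

Fixpoint I_moves (v : nat -> R) (n : nat) : list A :=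
  match n with
  | O => []
  | S n => I_moves v n ++ [sigma (I_moves v n) (prefix v n)]
  end.

Definition I_play (v : nat -> R) (t : nat) : A := sigma (I_moves v t) (prefix v t).

Lemma prefix_I_play v n : prefix (I_play v) n = I_moves v n.
Proof. induction n as [|n IH]; [reflexivity |]. rewrite prefix_S, IH. reflexivity. Qed.

Lemma I_play_follows v : follows_I sigma (I_play v) v.
Proof. intros t. rewrite prefix_I_play. reflexivity. Qed.

Lemma I_play_agree v v' m : agree v v' m -> agree (I_play v) (I_play v') (S m).
Proof.
  intros H.
  assert (Hpre : forall t, (t <= m)%nat -> prefix v t = prefix v' t).
  { intros t Ht. apply prefix_agree, (agree_le _ _ m); assumption. }
  assert (Hmoves : forall t, (t <= m)%nat -> I_moves v t = I_moves v' t).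
  { induction t as [|t IH]; intros Ht; [reflexivity |]. simpl.
    rewrite IH, Hpre by lia. reflexivity. }
  intros t Ht. unfold I_play. rewrite Hmoves, Hpre by lia. reflexivity.
Qed.

Hypothesis sigma_wins : winning_I T (indicator B) sigma.

Lemma I_play_branch v : branch T (I_play v).
Proof. apply (sigma_wins _ v), I_play_follows. Qed.

Lemma I_play_loses v : LimSup_seq v <> Finite (indicator B (I_play v)).
Proof. apply (sigma_wins _ v), I_play_follows. Qed.

(* Nodes of the scheme: finite 0/1 answer sequences, zero from the depth on. *)
Definition I_node : Type := ((nat -> R) * nat)%type.

Definition I_admissible (u : I_node) : Prop :=
  binary (fst u) /\ forall t, (snd u <= t)%nat -> fst u t = 0.

Definition I_step (u u' : I_node) : Prop :=
  agree (fst u') (fst u) (snd u) /\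
  exists j, (snd u <= j < snd u')%nat /\ fst u' j = 1.

Definition raise (w : nat -> R) (i : nat) (t : nat) : R :=
  if lt_dec t i then w t else if Nat.eq_dec t i then 1 else 0.

Lemma raise_agree w i : agree (raise w i) w i.
Proof. intros t Ht. unfold raise. destruct (lt_dec t i); [reflexivity | lia]. Qed.

Lemma raise_at w i : raise w i i = 1.
Proof.
  unfold raise. destruct (lt_dec i i); [lia |].
  destruct (Nat.eq_dec i i); [reflexivity | lia].
Qed.

Lemma raise_admissible w i : binary w -> I_admissible (raise w i, S i).
Proof.
  intros Hw. split; simpl; intros t; unfold raise.
  - destruct (lt_dec t i); [apply Hw |]. destruct (Nat.eq_dec t i); auto.
  - intros Ht. destruct (lt_dec t i); [lia |]. destruct (Nat.eq_dec t i); [lia | reflexivity].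
Qed.

Definition ones_from (w : nat -> R) (h : nat) (t : nat) : R :=
  if lt_dec t h then w t else 1.

Lemma I_admissible_in_B u : I_admissible u -> B (I_play (fst u)).
Proof.
  intros [_ Hzero]. apply indicator_ne0. intros Hind. apply (I_play_loses (fst u)).
  rewrite Hind. apply LimSup_eventually_const. exists (snd u). exact Hzero.
Qed.

Lemma ones_from_outside_B w h : ~ B (I_play (ones_from w h)).
Proof.
  apply indicator_ne1. intros Hind. apply (I_play_loses (ones_from w h)).
  rewrite Hind. apply LimSup_eventually_const. exists h. intros t Ht.
  unfold ones_from. destruct (lt_dec t h); [lia | reflexivity].
Qed.

Lemma I_split u : I_admissible u ->
  exists u1 u2, splits (fun u => I_play (fst u)) snd I_admissible I_step u u1 u2.
Proof.
  destruct u as [w h]. intros Hu. pose proof (I_admissible_in_B _ Hu) as Hin. simpl in Hin.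
  destruct Hu as [Hbin _]. simpl in Hbin.
  pose proof (ones_from_outside_B w h) as Hout.
  set (w1 := ones_from w h) in *.
  assert (Hw1 : agree w1 w h).
  { intros t Ht. unfold w1, ones_from. destruct (lt_dec t h); [reflexivity | lia]. }
  assert (Hbin1 : binary w1).
  { intros t. unfold w1, ones_from. destruct (lt_dec t h); auto. }
  assert (Hdiff : exists i, I_play w i <> I_play w1 i).
  { apply not_all_ex_not. intros Hall. apply Hout.
    rewrite <- (functional_extensionality _ _ Hall). exact Hin. }
  destruct Hdiff as [i Hi].
  assert (Hhi : (h < i)%nat).
  { destruct (Nat.lt_ge_cases h i) as [|Hle]; [assumption |].
    exfalso. apply Hi. symmetry. apply (I_play_agree _ _ h Hw1). lia. }
  assert (Ha : agree (raise w i) w h) by (apply (agree_le _ _ i); [lia | apply raise_agree]).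
  assert (Hb : agree (raise w1 i) w h).
  { apply (agree_trans _ w1); [apply (agree_le _ _ i); [lia | apply raise_agree] | exact Hw1]. }
  exists (raise w i, S i), (raise w1 i, S i). unfold splits, extends, I_step; simpl.
  split; [| split]; [split; [| split; [| split]] .. |].
  - apply raise_admissible, Hbin.
  - split; [exact Ha | exists i; split; [lia | apply raise_at]].
  - lia.
  - apply (agree_le _ _ (S h)); [lia | apply I_play_agree, Ha].
  - apply raise_admissible, Hbin1.
  - split; [exact Hb | exists i; split; [lia | apply raise_at]].
  - lia.
  - apply (agree_le _ _ (S h)); [lia | apply I_play_agree, Hb].
  - exists i. split; [lia | split; [lia |]].
    rewrite (I_play_agree _ _ i (raise_agree w i)), (I_play_agree _ _ i (raise_agree w1 i))
      by lia.
    exact Hi.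
Qed.

(* A play approximated along an infinite chain of steps answers II's sequence
   with infinitely many 1s, hence lies outside B. *)
Lemma I_chain_outside_B (y : nat -> A) (us : nat -> I_node) :
  (forall k, I_admissible (us k) /\ I_step (us k) (us (S k)) /\
     (k <= snd (us k))%nat /\ agree y (I_play (fst (us k))) (snd (us k))) ->
  ~ B y.
Proof.
  intros Hus.
  set (v := fun t => fst (us (S t)) t).
  assert (Hv : forall k, agree v (fst (us k)) (snd (us k))).
  { apply (diagonal_agree (fun k => fst (us k)) (fun k => snd (us k))).
    - intros k. destruct (Hus k) as (_ & (_ & j & Hj & _) & _). lia.
    - intros k. apply (Hus k).
    - intros k. apply (Hus k). }
  assert (Hy : y = I_play v).
  { apply functional_extensionality. intros t.
    destruct (Hus (S t)) as (_ & _ & Ht & Hagree).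
    rewrite Hagree by lia. symmetry. apply (I_play_agree _ _ _ (Hv (S t))). lia. }
  assert (Hone : LimSup_seq v = 1).
  { apply LimSup_binary_often_one.
    - intros t. apply (Hus (S t)).
    - intros N. destruct (Hus N) as (_ & (_ & j & Hj & Hvj) & HN & _).
      exists j. split; [lia |]. rewrite (Hv (S N)); [exact Hvj | lia]. }
  apply indicator_ne1. intros Hind. apply (I_play_loses v).
  rewrite <- Hy, Hind. exact Hone.
Qed.

Lemma I_not_winning : bernstein T B -> False.
Proof.
  intros (_ & _ & Hno_perfect_outside).
  destruct (cantor_scheme T (fun u : I_node => I_play (fst u)) snd I_admissible I_step
              (fun _ => 0, 0%nat) I_split (fun u _ => I_play_branch (fst u)))
    as (P & HP & Hne & Happrox).
  - split; [intros t; auto | intros t _; reflexivity].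
  - apply Hno_perfect_outside. exists P. split; [exact HP | split; [exact Hne |]].
    intros y Hy. split; [apply (proj1 (proj1 HP)), Hy |].
    destruct (Happrox y Hy) as [us Hus]. apply (I_chain_outside_B y us Hus).
Qed.

End PlayerI.

Section Cylinders.
Local Open Scope nat_scope.
Context {A : Type} (T : list A -> Prop).

Definition in_cylinder (s : list A) (x : nat -> A) : Prop :=
  branch T x /\ prefix x (length s) = s.

Definition countable_cylinder (s : list A) : Prop :=
  exists g : (nat -> A) -> nat,
    forall x y, in_cylinder s x -> in_cylinder s y -> g x = g y -> x = y.

Definition thick (z : nat -> A) (n : nat) : Prop := ~ countable_cylinder (prefix z n).

Lemma in_cylinder_prefix z n x : in_cylinder (prefix z n) x <-> branch T x /\ agree x z n.
Proof. unfold in_cylinder. rewrite prefix_length, prefix_agree. reflexivity. Qed.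

Lemma body_nonempty : ~ countable_body T -> exists y, branch T y.
Proof.
  intros Hbody. apply NNPP. intros Hempty. apply Hbody.
  exists (fun _ => 0). intros x y Hx. exfalso. apply Hempty. exists x. exact Hx.
Qed.

Lemma thick_root z : ~ countable_body T -> thick z 0.
Proof.
  intros Hbody [g Hg]. apply Hbody. exists g. intros x y Hx Hy.
  apply Hg; apply in_cylinder_prefix;
    split; [assumption | intros i Hi; lia | assumption | intros i Hi; lia].
Qed.

Fixpoint list_code (f : A -> nat) (l : list A) : nat :=
  match l with [] => 0 | a :: l => S (to_nat (f a, list_code f l)) end.

Lemma list_code_inj f : (forall a b, f a = f b -> a = b) ->
  forall l l', list_code f l = list_code f l' -> l = l'.
Proof.
  intros Hf l. induction l as [|a l IH]; intros [|b l'] H; cbn [list_code] in H;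
    try discriminate; [reflexivity |].
  apply Nat.succ_inj, to_nat_inj in H. injection H as Hab Hl.
  f_equal; [apply Hf | apply IH]; assumption.
Qed.

(* Cantor-Bendixson step: over a countable alphabet, a thick cylinder contains
   two thick cylinders on disjoint basic sets.  Otherwise its branches all lie
   in countably many countable cylinders, except for at most one branch whose
   every cylinder is thick; so the cylinder itself would be countable. *)
Lemma thick_splits z n : countable_type (A := A) -> thick z n ->
  exists z1 n1 z2 n2, thick z1 n1 /\ thick z2 n2 /\ branch T z1 /\ branch T z2 /\
    n < n1 /\ n < n2 /\ agree z1 z n /\ agree z2 z n /\
    exists i, i < n1 /\ i < n2 /\ z1 i <> z2 i.
Proof.
  intros [f Hf] Hthick. apply NNPP. intros Hno_split. apply Hthick.
  set (injective_on (s : list A) (g : (nat -> A) -> nat) := forall x y : nat -> A,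
         in_cylinder s x -> in_cylinder s y -> g x = g y -> x = y).
  set (witness (s : list A) := epsilon (inhabits (fun _ : nat -> A => 0)) (injective_on s)).
  assert (Hwitness : forall s, countable_cylinder s -> injective_on s (witness s)).
  { intros s Hs. apply (epsilon_spec (inhabits (fun _ : nat -> A => 0)) (injective_on s) Hs). }
  set (level (x : nat -> A) := epsilon (inhabits 0) (fun m => ~ thick x m)).
  assert (Hlevel : forall x, ~ (forall m, thick x m) -> countable_cylinder (prefix x (level x))).
  { intros x Hx. apply NNPP. apply (epsilon_spec (inhabits 0) (fun m => ~ thick x m)).
    apply not_all_ex_not, Hx. }
  exists (fun x => if excluded_middle_informative (forall m, thick x m) then 0
     else S (to_nat (list_code f (prefix x (level x)), witness (prefix x (level x)) x))).
  intros x y Hx Hy.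
  apply in_cylinder_prefix in Hx as [Bx Ax]. apply in_cylinder_prefix in Hy as [By Ay].
  destruct (excluded_middle_informative (forall m, thick x m)) as [Sx|Sx];
  destruct (excluded_middle_informative (forall m, thick y m)) as [Sy|Sy];
    intros E; try discriminate.
  - (* two branches thick everywhere would split the cylinder where they differ *)
    apply functional_extensionality. intros i. apply NNPP. intros Hne.
    apply Hno_split. exists x, (S (Nat.max n i)), y, (S (Nat.max n i)).
    repeat split; auto; try lia. exists i. repeat split; auto; lia.
  - (* equal codes: same countable cylinder, same index in it *)
    apply Nat.succ_inj, to_nat_inj in E. injection E as Ecode Ewit.
    apply (list_code_inj f Hf) in Ecode.
    apply (Hwitness _ (Hlevel x Sx)); [split; [exact Bx | rewrite prefix_length; reflexivity] |
      | rewrite Ewit, Ecode; reflexivity].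
    split; [exact By |]. rewrite Ecode, prefix_length. reflexivity.
Qed.

End Cylinders.

Section PlayerII.
Local Open Scope R_scope.
Context {A : Type} (T : list A -> Prop) (B : (nat -> A) -> Prop) (tau : @strategyII A).

Fixpoint II_moves (x : nat -> A) (n : nat) : list R :=
  match n with
  | O => []
  | S n => II_moves x n ++ [tau (prefix x (S n)) (II_moves x n)]
  end.

Definition II_play (x : nat -> A) (t : nat) : R := tau (prefix x (S t)) (II_moves x t).

Lemma prefix_II_play x n : prefix (II_play x) n = II_moves x n.
Proof. induction n as [|n IH]; [reflexivity |]. rewrite prefix_S, IH. reflexivity. Qed.

Lemma II_play_follows x : follows_II tau x (II_play x).
Proof. intros t. rewrite prefix_II_play. reflexivity. Qed.

Lemma II_play_agree x y m : agree x y m -> agree (II_play x) (II_play y) m.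
Proof.
  intros H.
  assert (Hpre : forall t, (t <= m)%nat -> prefix x t = prefix y t).
  { intros t Ht. apply prefix_agree, (agree_le _ _ m); assumption. }
  assert (Hmoves : forall t, (t <= m)%nat -> II_moves x t = II_moves y t).
  { induction t as [|t IH]; intros Ht; [reflexivity |]. simpl.
    rewrite IH, Hpre by lia. reflexivity. }
  intros t Ht. unfold II_play. rewrite Hmoves, Hpre by lia. reflexivity.
Qed.

(* Nodes of the schemes: a point together with the length of its cylinder. *)
Definition II_node : Type := ((nat -> A) * nat)%type.

Definition thick_node (u : II_node) : Prop := branch T (fst u) /\ thick T (fst u) (snd u).

Definition refines (u u' : II_node) : Prop :=
  (snd u <= snd u')%nat /\ agree (fst u') (fst u) (snd u).

Lemma refines_refl u : refines u u.
Proof. split; [lia | intros i _; reflexivity]. Qed.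

Lemma refines_trans u1 u2 u3 : refines u1 u2 -> refines u2 u3 -> refines u1 u3.
Proof.
  intros [H12 A12] [H23 A23]. split; [lia |].
  apply (agree_trans _ (fst u2)); [apply (agree_le _ _ (snd u2)) | ]; assumption.
Qed.

Hypothesis countable_alphabet : countable_type (A := A).

Definition below (b u : II_node) : Prop := thick_node u /\ refines b u.

Lemma refinement_extends b R u u' : refines b u -> refines u u' ->
  (snd u < snd u')%nat -> thick_node u' -> R u u' -> extends fst snd (below b) R u u'.
Proof.
  intros Hbu [Hd Ha] Hlt Hu' HR.
  split; [split; [exact Hu' | apply (refines_trans _ u); [| split]; assumption] |].
  split; [exact HR | split; assumption].
Qed.

Section ThickScheme.
Variables (b : II_node) (R : II_node -> II_node -> Prop).
Hypothesis extend : forall u, below b u -> exists u', thick_node u' /\ refines u u' /\ R u u'.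
Hypothesis R_hereditary : forall u u1 u', refines u u1 -> R u1 u' -> R u u'.

Lemma below_splits u : below b u -> exists u1 u2, splits fst snd (below b) R u u1 u2.
Proof.
  intros [Hu Hbu].
  destruct (thick_splits T (fst u) (snd u) countable_alphabet (proj2 Hu))
    as (z1 & n1 & z2 & n2 & T1 & T2 & B1 & B2 & L1 & L2 & A1 & A2 & i & I1 & I2 & Di).
  assert (Hu1 : refines u (z1, n1)) by (split; simpl; [lia | exact A1]).
  assert (Hu2 : refines u (z2, n2)) by (split; simpl; [lia | exact A2]).
  destruct (extend (z1, n1) (conj (conj B1 T1) (refines_trans _ _ _ Hbu Hu1)))
    as (u1 & Tu1 & Hr1 & HR1).
  destruct (extend (z2, n2) (conj (conj B2 T2) (refines_trans _ _ _ Hbu Hu2)))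
    as (u2 & Tu2 & Hr2 & HR2).
  exists u1, u2. split; [| split].
  - apply refinement_extends; [exact Hbu | apply (refines_trans _ _ _ Hu1 Hr1) | | exact Tu1 |].
    + destruct Hr1 as [D1 _]. simpl in *. lia.
    + apply (R_hereditary _ _ _ Hu1 HR1).
  - apply refinement_extends; [exact Hbu | apply (refines_trans _ _ _ Hu2 Hr2) | | exact Tu2 |].
    + destruct Hr2 as [D2 _]. simpl in *. lia.
    + apply (R_hereditary _ _ _ Hu2 HR2).
  - destruct Hr1 as [D1 R1], Hr2 as [D2 R2]. simpl in *.
    exists i. split; [lia | split; [lia |]]. rewrite R1, R2 by assumption. exact Di.
Qed.

Lemma thick_scheme : thick_node b ->
  exists P, perfectX T P /\ (exists x, P x) /\
    forall y, P y -> exists us : nat -> II_node, forall k,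
      below b (us k) /\ R (us k) (us (S k)) /\
      (k <= snd (us k))%nat /\ agree y (fst (us k)) (snd (us k)).
Proof.
  intros Hb. apply (cantor_scheme T fst snd (below b) R b below_splits).
  - intros u [Hu _]. apply Hu.
  - split; [exact Hb | apply refines_refl].
Qed.

End ThickScheme.

Definition high_between (u u' : II_node) : Prop :=
  exists i, (snd u <= i < snd u')%nat /\ 1/2 <= II_play (fst u') i.

Lemma high_between_mono u u1 u' : refines u u1 -> high_between u1 u' -> high_between u u'.
Proof. intros [Hd _] (i & Hi & Hhigh). exists i. split; [lia | exact Hhigh]. Qed.

Hypothesis tau_wins : winning_II T (indicator B) tau.

Lemma II_play_value y : branch T y -> LimSup_seq (II_play y) = Finite (indicator B y).
Proof. intros Hy. apply tau_wins; [exact Hy | apply II_play_follows]. Qed.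

Definition high_dense (b : II_node) : Prop :=
  forall u, below b u -> exists u', thick_node u' /\ refines u u' /\ high_between u u'.

(* If high answers are dense below [b], the resulting perfect set consists of
   plays with lim sup >= 1/2, i.e. inside B. *)
Lemma II_perfect_inside_B b : thick_node b -> high_dense b ->
  exists P, perfectX T P /\ (exists x, P x) /\ (forall x, P x -> B x).
Proof.
  intros Hb Hhigh.
  destruct (thick_scheme b high_between Hhigh high_between_mono Hb) as (P & HP & Hne & Happrox).
  exists P. split; [exact HP | split; [exact Hne |]].
  intros y Hy. destruct (Happrox y Hy) as [us Hus].
  assert (Hbranch : branch T y) by (apply (proj1 (proj1 HP)), Hy).
  apply indicator_ne0. intros Hind.
  assert (Hge : Rbar_le (1/2) (LimSup_seq (II_play y))).
  { apply LimSup_often_ge. intros N.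
    destruct (Hus N) as (_ & (i & Hi & Hhi) & HN & _).
    destruct (Hus (S N)) as (_ & _ & _ & Hagree).
    exists i. split; [lia |]. rewrite (II_play_agree _ _ _ Hagree); [exact Hhi | lia]. }
  rewrite II_play_value, Hind in Hge by exact Hbranch. simpl in Hge. lra.
Qed.

(* If all thick refinements of [u] have low answers beyond [snd u], the
   resulting perfect set consists of plays with lim sup <= 1/2, i.e. outside B. *)
Lemma II_perfect_outside_B u : thick_node u ->
  (forall u', below u u' -> ~ high_between u u') ->
  exists P, perfectX T P /\ (exists x, P x) /\ (forall x, P x -> branch T x /\ ~ B x).
Proof.
  intros Hu Hlow.
  destruct (thick_scheme u (fun _ _ => True)
              (fun u' Hu' => ex_intro _ u' (conj (proj1 Hu') (conj (refines_refl u') I)))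
              (fun _ _ _ _ _ => I) Hu)
    as (P & HP & Hne & Happrox).
  exists P. split; [exact HP | split; [exact Hne |]].
  intros y Hy. destruct (Happrox y Hy) as [us Hus].
  assert (Hbranch : branch T y) by (apply (proj1 (proj1 HP)), Hy).
  split; [exact Hbranch |]. apply indicator_ne1. intros Hind.
  assert (Hle : Rbar_le (LimSup_seq (II_play y)) (1/2)).
  { apply LimSup_eventually_le. exists (snd u). intros i Hi.
    destruct (Hus (S i)) as (Hbelow & _ & Hi' & Hagree).
    rewrite (II_play_agree _ _ _ Hagree) by lia.
    apply Rnot_lt_le. intros Hhigh. apply (Hlow _ Hbelow).
    exists i. split; [lia | lra]. }
  rewrite II_play_value, Hind in Hle by exact Hbranch. simpl in Hle. lra.
Qed.

Lemma II_not_winning : ~ countable_body T -> bernstein T B -> False.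
Proof.
  intros Hbody (_ & Hno_inside & Hno_outside).
  destruct (body_nonempty T Hbody) as [y0 Hy0].
  assert (Hroot : thick_node (y0, 0%nat)) by (split; [exact Hy0 | apply thick_root, Hbody]).
  destruct (classic (high_dense (y0, 0%nat))) as [Hdense | Hnot_dense].
  - exact (Hno_inside (II_perfect_inside_B _ Hroot Hdense)).
  - apply not_all_ex_not in Hnot_dense as [u Hu].
    apply imply_to_and in Hu as [[Hthick _] Hlow].
    apply Hno_outside, (II_perfect_outside_B u Hthick).
    intros u' [Hu' Hrefines] Hhigh. apply Hlow. exists u'. tauto.
Qed.

End PlayerII.

Theorem mainTheorem7 (A : Type) (T : list A -> Prop) (B : (nat -> A) -> Prop) :
  inhabited A -> @countable_type A ->
  is_tree T -> is_pruned T ->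
  ~ countable_body T ->
  bernstein T B ->
  ~ determined T (indicator B).
Proof.
  intros _ Hcountable _ _ Hbody Hbernstein [[sigma Hsigma] | [tau Htau]].
  - exact (I_not_winning T B sigma Hsigma Hbernstein).
  - exact (II_not_winning T B tau Hcountable Htau Hbody Hbernstein).
Qed.
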